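(* Let $p$ be a prime, $k \geq 1$ an integer, $N = p^{2k+1}$, and let $d$ be odd. In the coefficient-choosing game of degree $d$ over $\mathbb{Z}/N\mathbb{Z}$, Wanda has a winning strategy (whether she moves first or second).
   Context: The coefficient-choosing game of degree $d$ over a finite ring $R = \mathbb{Z}/N\mathbb{Z}$: Nora and Wanda alternately choose coefficients of $f(x) = a_d x^d + \cdots + a_0$; on each move the current player picks a not-yet-chosen coefficient and assigns it a value in $R$, subject to $a_d \neq 0$, $a_0 \neq 0$. After all $d+1$ coefficients are chosen, Wanda wins if $f$ has a root in $R$, and Nora wins otherwise. *)

From mathcomp Require Import all_boot all_algebra.
Set Implicit Arguments. Unset Strict Implicit. Unset Printing Implicit Defensive.
Import GRing.Theory.
Local Open Scope ring_scope.

(* A position is a partial assignment of the d+1 coefficients a_0..a_d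
   (index i : 'I_d.+1 is the coefficient of x^i; None = not yet chosen). *)

Definition legal_move (R : nzRingType) (d : nat)
    (pos : {ffun 'I_d.+1 -> option R}) (i : 'I_d.+1) (v : R) : Prop :=
  [/\ pos i = None,
      (i = ord0 -> v != 0) &
      (i = ord_max -> v != 0)].

Definition play_move (R : nzRingType) (d : nat)
    (pos : {ffun 'I_d.+1 -> option R}) (i : 'I_d.+1) (v : R)
    : {ffun 'I_d.+1 -> option R} :=
  [ffun j => if j == i then Some v else pos j].

Definition pos_poly (R : nzRingType) (d : nat)
    (pos : {ffun 'I_d.+1 -> option R}) : {poly R} :=
  \poly_(i < d.+1) odflt 0 (pos (inord i)).

Fixpoint wanda_wins (R : comNzRingType) (d : nat) (n : nat) (wturn : bool)
    (pos : {ffun 'I_d.+1 -> option R}) {struct n} : Prop :=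
  match n with
  | 0 => exists x : R, root (pos_poly pos) x
  | n'.+1 =>
      if wturn then
        exists i v, legal_move pos i v /\ wanda_wins n' false (play_move pos i v)
      else
        forall i v, legal_move pos i v -> wanda_wins n' true (play_move pos i v)
  end.

Definition wanda_has_winning_strategy (R : comNzRingType) (d : nat)
    (wanda_first : bool) : Prop :=
  @wanda_wins R d d.+1 wanda_first [ffun _ => None].

From mathcomp Require Import all_boot all_algebra.
From mathcomp Require Import ring zify.

Set Implicit Arguments. Unset Strict Implicit. Unset Printing Implicit Defensive.
Import GRing.Theory.
Local Open Scope ring_scope.

(* Wanda first, [d >= 3]: she opens with [a_0 = p^2k].  If Nora then sets
   [a_1 = v], Wanda answers [a_2 = -1 - v / p^k], otherwise she sets [a_1 = 1];
   a root then exists whatever happens next.  When [p^k] does not divide [a_1],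
   say [gcd(p^k, a_1) = p^j] with [j < k] and [a a_1 = p^j (mod p^k)], the
   element [x = a p^(2k-j)] has [x^2 = 0] and [p^2k + a_1 x = 0]; when
   [a_1 = q p^k], the root is [x = p^k], as [x^3 = 0] and
   [p^2k + q p^2k + a_2 p^2k = 0].
   Nora first, [d] odd: Wanda moves last.  By filling [a_d] and then [a_0]
   with [1] as early as possible she makes her last slot interior, and fills it
   with [-f(1)]; only for [d = 3] can [a_0] come last, with [a_3 = 1], and then
   [a_0 = -f(x)] for one of [x = 0, 1, 2, 3], since the third finite difference
   of a monic cubic is [6 <> 0]. *)

Section Evaluation.
Variable R : comNzRingType.
Implicit Types (f : {poly R}) (x : R).

Lemma horner_nilpotent f x m :
  x ^+ m = 0 -> f.[x] = \sum_(i < m) f`_i * x ^+ i.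
Proof.
move=> xm0; rewrite (horner_coef_wide x (leq_maxr m (size f))).
rewrite -!(big_mkord xpredT (fun i => f`_i * x ^+ i)).
rewrite (big_cat_nat (leq0n m) (leq_maxl m (size f))) /=.
rewrite [X in _ + X]big_nat_cond [X in _ + X]big1 ?addr0 // => i /andP[/andP[le_mi _] _].
by rewrite -(subnKC le_mi) exprD xm0 mul0r mulr0.
Qed.

Lemma horner_sqr_eq0 f x : x ^+ 2 = 0 -> f.[x] = f`_0 + f`_1 * x.
Proof.
by move/horner_nilpotent->; rewrite !big_ord_recr big_ord0 /= add0r expr0 mulr1.
Qed.

Lemma horner_cube_eq0 f x :
  x ^+ 3 = 0 -> f.[x] = f`_0 + f`_1 * x + f`_2 * x ^+ 2.
Proof.
by move/horner_nilpotent->; rewrite !big_ord_recr big_ord0 /= add0r expr0 mulr1.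
Qed.

Lemma cubic_third_difference f : (size f <= 4)%N ->
  f.[3%:R] - 3%:R * f.[2%:R] + 3%:R * f.[1] - f.[0] = 6%:R * f`_3.
Proof.
by move=> size_f; rewrite !(horner_coef_wide _ size_f) !big_ord_recr !big_ord0 /=; ring.
Qed.

Lemma exists_nonroot_monic_cubic f :
  (6%:R : R) != 0 -> (size f <= 4)%N -> f`_3 = 1 -> exists x, f.[x] != 0.
Proof.
move=> six_neq0 size_f lead_f.
have [f0|] := eqVneq f.[0] 0; last by exists 0.
have [f1|] := eqVneq f.[1] 0; last by exists 1.
have [f2|] := eqVneq f.[2%:R] 0; last by exists 2%:R.
exists 3%:R; apply: contra_neq six_neq0 => f3.
have := cubic_third_difference size_f.
by rewrite f0 f1 f2 f3 lead_f !mulr0 !subr0 addr0 mulr1 => <-.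
Qed.
End Evaluation.

Section Game.
Variables (R : comNzRingType) (d : nat).
Local Notation position := {ffun 'I_d.+1 -> option R}.
Implicit Types (pos : position) (i j : 'I_d.+1) (v x : R).

Definition nfree pos := #|[set j | pos j == None]|.

Lemma nfree_play_move pos i v :
  pos i = None -> nfree (play_move pos i v) = (nfree pos).-1.
Proof.
move=> free_i; rewrite /nfree (cardsD1 i [set j | pos j == None]) inE free_i eqxx /=.
by apply: eq_card => j; rewrite !inE ffunE; case: (j == i).
Qed.

Lemma nfree_empty : nfree ([ffun _ => None] : position) = d.+1.
Proof.
by rewrite /nfree -[RHS]card_ord -cardsT; apply: eq_card => j; rewrite !inE ffunE.
Qed.

Lemma nfree_eq0_filled pos : nfree pos = 0%N -> forall j, pos j <> None.
Proof. by move=> /card0_eq nfree0 j; move: (nfree0 j); rewrite !inE => /negbT/eqP. Qed.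

Lemma nfree_gt0_free pos : (0 < nfree pos)%N -> exists j, pos j = None.
Proof. by rewrite card_gt0 => /set0Pn[j]; rewrite inE => /eqP; exists j. Qed.

Lemma play_move_same pos i v : play_move pos i v i = Some v.
Proof. by rewrite ffunE eqxx. Qed.

Lemma play_move_other pos i v j : j != i -> play_move pos i v j = pos j.
Proof. by rewrite ffunE => /negbTE->. Qed.

Lemma play_move_filled pos i v j u :
  pos i = None -> pos j = Some u -> play_move pos i v j = Some u.
Proof.
move=> free_i set_j; rewrite play_move_other //.
by apply/eqP => eq_ji; rewrite eq_ji free_i in set_j.
Qed.

Lemma play_move_free pos i v j :
  play_move pos i v j = None -> j != i /\ pos j = None.
Proof. by rewrite ffunE; case: eqP. Qed.

Lemma legal_move1 pos j : pos j = None -> legal_move pos j 1.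
Proof. by split=> // _; apply: oner_neq0. Qed.

Lemma inord_max : inord d = ord_max :> 'I_d.+1.
Proof. by apply: val_inj; rewrite /= inordK. Qed.

Lemma legal_move_interior pos j v :
  pos j = None -> j != ord0 -> j != ord_max -> legal_move pos j v.
Proof. by move=> free_j /eqP ne_j0 /eqP ne_jd; split. Qed.

Lemma coef_pos_poly pos (i : nat) :
  (i <= d)%N -> (pos_poly pos)`_i = odflt 0 (pos (inord i)).
Proof. by rewrite coef_poly ltnS => ->. Qed.

Lemma size_pos_poly pos : (size (pos_poly pos) <= d.+1)%N.
Proof. exact: size_poly. Qed.

Lemma horner_pos_poly pos x :
  (pos_poly pos).[x] = \sum_i odflt 0 (pos i) * x ^+ i.
Proof. by rewrite horner_poly; apply: eq_bigr => i _; rewrite inord_val. Qed.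

Lemma horner_play_move pos j v x : pos j = None ->
  (pos_poly (play_move pos j v)).[x] = v * x ^+ j + (pos_poly pos).[x].
Proof.
move=> free_j; rewrite !horner_pos_poly (bigD1 j) //= [in RHS](bigD1 j) //=.
rewrite play_move_same free_j mul0r add0r; congr (_ + _).
by apply: eq_bigr => i ne_ij; rewrite play_move_other.
Qed.

Lemma horner_empty x : (pos_poly ([ffun _ => None] : position)).[x] = 0.
Proof. by rewrite horner_pos_poly big1 // => i _; rewrite ffunE mul0r. Qed.

Lemma root_play_move pos j x : pos j = None -> x ^+ j = 1 ->
  root (pos_poly (play_move pos j (- (pos_poly pos).[x]))) x.
Proof. by move=> free_j xj; rewrite rootE horner_play_move // xj mulr1 addNr. Qed.

Lemma wanda_wins_of_invariant (I : nat -> bool -> position -> Prop) :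
  (forall b pos, I 0%N b pos -> exists x, root (pos_poly pos) x) ->
  (forall n pos, I n.+1 true pos ->
     exists i v, legal_move pos i v /\ I n false (play_move pos i v)) ->
  (forall n pos, I n.+1 false pos ->
     forall i v, legal_move pos i v -> I n true (play_move pos i v)) ->
  forall n b pos, I n b pos -> wanda_wins n b pos.
Proof.
move=> I_end wanda_step nora_step; elim=> [|n IHn] [] pos /= Ipos; try exact: I_end Ipos.
  have [i [v [legal Inext]]] := wanda_step _ _ Ipos.
  by exists i, v; split; last exact: IHn.
by move=> i v legal; apply: IHn; apply: nora_step.
Qed.

Lemma wanda_wins_of_stable (P : position -> Prop) :
  (forall pos i v, pos i = None -> P pos -> P (play_move pos i v)) ->
  (forall pos, nfree pos = 0%N -> P pos -> exists x, root (pos_poly pos) x) ->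
  forall n b pos, nfree pos = n -> P pos -> wanda_wins n b pos.
Proof.
move=> P_play P_root n b pos nfree_pos Ppos.
apply: (@wanda_wins_of_invariant (fun n _ pos => nfree pos = n /\ P pos)); last by split.
- by move=> _ pos' [/P_root].
- move=> n' pos' [nfree_n P_pos'].
  have [j free_j] : exists j, pos' j = None by apply: nfree_gt0_free; rewrite nfree_n.
  exists j, 1; split; first exact: legal_move1.
  by split; [rewrite nfree_play_move ?nfree_n | apply: P_play].
- move=> n' pos' [nfree_n P_pos'] i v [free_i _ _].
  by split; [rewrite nfree_play_move ?nfree_n | apply: P_play].
Qed.

End Game.

Section DegreeOne.
Variable R : comNzRingType.
Local Notation position := {ffun 'I_2 -> option R}.

Lemma ord2_extreme (i : 'I_2) : i = ord0 \/ i = ord_max.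
Proof. by case: i => [[|[|]]] // ?; [left | right]; apply: val_inj. Qed.

Lemma wanda_first_wins_deg1 : wanda_wins 2 true ([ffun _ => None] : position).
Proof.
exists ord_max, 1; split; first by apply: legal_move1; rewrite ffunE.
move=> i v [free_i _ _].
have -> : i = ord0.
  by case: (ord2_extreme i) free_i => // ->; rewrite play_move_same.
exists (- v); rewrite rootE !horner_play_move ?ffunE // horner_empty.
by rewrite expr0 expr1 mulr1 mul1r addr0 addrN.
Qed.

Lemma nora_first_wins_deg1 : wanda_wins 2 false ([ffun _ => None] : position).
Proof.
move=> i v [_ v_nz0 v_nzmax].
have v_neq0 : v != 0 by case: (ord2_extreme i) => [/v_nz0|/v_nzmax].
have [j ne_ji] : exists j, j != i.
  by case: (ord2_extreme i) => ->; [exists ord_max | exists ord0].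
have free_j : play_move [ffun _ => None] i v j = None by rewrite play_move_other ?ffunE.
have f1 : (pos_poly (play_move [ffun _ => None] i v)).[1] = v.
  by rewrite horner_play_move ?ffunE // horner_empty expr1n mulr1 addr0.
exists j, (- v); split; first by split=> // _; rewrite oppr_eq0.
by exists 1; have := root_play_move free_j (expr1n _ j); rewrite f1.
Qed.
End DegreeOne.

Section NoraFirst.
Variables (R : comNzRingType) (d : nat).
Hypotheses (d_odd : odd d) (d_ge3 : (3 <= d)%N).
Hypothesis six_neq0 : d = 3%N -> (6%:R : R) != 0.
Local Notation position := {ffun 'I_d.+1 -> option R}.
Implicit Types (pos : position).

Definition wanda_safe n pos := [/\ pos ord_max = None -> (3 <= n)%N,
  pos ord_max = None -> pos ord0 = None -> d = 3%N \/ (5 <= n)%N &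
  pos ord0 = None -> (3 <= n)%N \/ pos ord_max = Some 1 /\ d = 3%N].

Definition nora_safe n pos := pos ord_max != None /\
  (pos ord0 = None -> (4 <= n)%N \/ pos ord_max = Some 1 /\ d = 3%N).

Definition nora_first_inv n b pos :=
  if n == 0%N then exists x, root (pos_poly pos) x
  else [/\ nfree pos = n, b = odd n & if b then wanda_safe n pos else nora_safe n pos].

Lemma wanda_last_move pos : nfree pos = 1%N -> wanda_safe 1 pos ->
  exists i v, legal_move pos i v /\ exists x, root (pos_poly (play_move pos i v)) x.
Proof.
move=> nfree1 [max_safe _ zero_safe].
have [j free_j] : exists j, pos j = None by apply: nfree_gt0_free; rewrite nfree1.
case: (eqVneq j ord0) => [j0|ne_j0].
  subst j; have [//|[max1 d3]] := zero_safe free_j.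
  have f3 : (pos_poly pos)`_3 = 1.
    by rewrite -[in LHS]d3 (coef_pos_poly pos (i := d)) // inord_max max1.
  have [|x fx] := exists_nonroot_monic_cubic (six_neq0 d3) _ f3.
    by rewrite -d3 size_pos_poly.
  exists ord0, (- (pos_poly pos).[x]); split; first by split=> // _; rewrite oppr_eq0.
  by exists x; apply: root_play_move; rewrite ?expr0.
have filled_max : pos ord_max != None by apply/eqP => /max_safe.
have ne_jmax : j != ord_max by apply: contraNneq filled_max => <-; rewrite free_j.
exists j, (- (pos_poly pos).[1]); split; first exact: legal_move_interior.
by exists 1; apply: root_play_move; rewrite ?expr1n.
Qed.

Lemma wanda_safe_move n pos : (3 <= n)%N -> nfree pos = n -> wanda_safe n pos ->
  exists i v, legal_move pos i v /\ nora_safe n.-1 (play_move pos i v).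
Proof.
move=> n_ge3 nfree_n [_ both_safe _].
case max_free: (pos ord_max) => [um|]; last first.
  exists ord_max, 1; split; first exact: legal_move1.
  split; first by rewrite play_move_same.
  move=> /play_move_free[_ /(both_safe max_free)] [d3|n_ge5]; last by left; lia.
  by right; rewrite play_move_same.
case zero_free: (pos ord0) => [u0|].
  have [j free_j] : exists j, pos j = None by apply: nfree_gt0_free; lia.
  exists j, 1; split; first exact: legal_move1.
  rewrite /nora_safe (play_move_filled _ free_j max_free).
  by rewrite (play_move_filled _ free_j zero_free).
exists ord0, 1; split; first exact: legal_move1.
by rewrite /nora_safe play_move_same (play_move_filled _ zero_free max_free).
Qed.

Lemma nora_safe_move n pos i v : pos i = None -> nora_safe n.+1 pos ->
  wanda_safe n (play_move pos i v).
Proof.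
move=> free_i [filled_max zero_safe].
have max_filled' : play_move pos i v ord_max <> None.
  by move/play_move_free => [_ /eqP]; rewrite (negbTE filled_max).
split=> [/max_filled'|/max_filled'|/play_move_free[_ /zero_safe]] //.
case=> [n_ge3|[max1 d3]]; [by left | right].
by rewrite (play_move_filled _ free_i max1).
Qed.

Lemma nora_first_inv_wins n b pos : nora_first_inv n b pos -> wanda_wins n b pos.
Proof.
apply: wanda_wins_of_invariant => [b' pos'|n' pos'|n' pos'].
- by rewrite /nora_first_inv eqxx.
- rewrite /nora_first_inv /= => -[nfree_n odd_n safe].
  case: n' nfree_n odd_n safe => [|n'] nfree_n odd_n safe.
    by have [i [v [legal root_f]]] := wanda_last_move nfree_n safe; exists i, v.
  have [|i [v [legal nsafe]]] := wanda_safe_move _ nfree_n safe; first by lia.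
  exists i, v; split=> //; case: legal => free_i _ _.
  by rewrite /nora_first_inv /= nfree_play_move // nfree_n; split=> //; lia.
- rewrite /nora_first_inv /= => -[nfree_n odd_n safe] i v [free_i _ _].
  case: n' nfree_n odd_n safe => [|n'] nfree_n odd_n safe; first by lia.
  rewrite /= nfree_play_move // nfree_n.
  by split=> //; [lia | apply: nora_safe_move].
Qed.

Lemma nora_first_wins : wanda_wins d.+1 false ([ffun _ => None] : position).
Proof.
move=> i v [free_i _ _]; apply: nora_first_inv_wins.
have d3_or_ge5 : d = 3%N \/ (5 <= d)%N.
  by move: d_odd d_ge3; case: d => [|[|[|[|[|]]]]] //; [left | right].
rewrite /nora_first_inv gtn_eqF; last by lia.
split; [by rewrite nfree_play_move // nfree_empty | by [] |].
by split=> [_ | _ _ | _]; [lia | exact: d3_or_ge5 | left; lia].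
Qed.
End NoraFirst.

Section PrimePowerModulus.
Variables (p k : nat).
Hypotheses (p_pr : prime p) (k_gt0 : (0 < k)%N).
Local Notation N := (p ^ (2 * k + 1))%N.
Local Notation R := 'Z_N.
Local Notation pR := (p%:R : R).

Lemma modulus_gt1 : (1 < N)%N.
Proof. by rewrite -[1%N](expn0 p) ltn_exp2l ?prime_gt1 // addn1. Qed.

Lemma Zp_nat_eq0 n : ((n%:R : R) == 0) = (N %| n)%N.
Proof. by rewrite Zp_nat -val_eqE /= Zp_cast ?modulus_gt1. Qed.

Lemma Zp_val1 : val (1 : R) = 1%N.
Proof. by rewrite /= modn_small. Qed.

Lemma Zp_expp_eq0 m : (2 * k + 1 <= m)%N -> pR ^+ m = 0.
Proof. by move=> le_Nm; apply/eqP; rewrite -natrX Zp_nat_eq0 dvdn_exp2l. Qed.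

Lemma Zp_expp_neq0 : pR ^+ (2 * k) != 0.
Proof.
rewrite -natrX Zp_nat_eq0; apply/negP => /dvdn_leq.
by rewrite expn_gt0 prime_gt0 // leq_exp2l ?prime_gt1 // addn1 ltnn => /(_ isT).
Qed.

Lemma Zp_six_neq0 : (6%:R : R) != 0.
Proof.
rewrite Zp_nat_eq0; apply/negP => /(dvdn_leq (isT : (0 < 6)%N)).
have : (2 ^ 3 <= N)%N.
  apply: (@leq_trans (p ^ 3)); first by rewrite leq_exp2r // prime_gt1.
  by rewrite leq_exp2l ?prime_gt1 //; lia.
by rewrite expnS; lia.
Qed.

Definition quadratic_reply (v : R) : R := - 1 - (val v %/ p ^ k)%:R.

Lemma exists_linear_annihilator (v : R) : ~~ (p ^ k %| val v)%N ->
  exists2 x : R, x ^+ 2 = 0 & pR ^+ (2 * k) + v * x = 0.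
Proof.
move=> pk_ndvd_v.
have pk_gt0 : (0 < p ^ k)%N by rewrite expn_gt0 prime_gt0.
have [a _ pk_dvd] := Bezoutl (val v) pk_gt0.
have /(dvdn_pfactor _ _ p_pr) [j le_jk gcdE] := dvdn_gcdl (p ^ k) (val v).
have lt_jk : (j < k)%N.
  rewrite ltn_neqAle le_jk andbT; apply: contra pk_ndvd_v => /eqP eq_jk.
  by move: (dvdn_gcdr (p ^ k) (val v)); rewrite gcdE eq_jk.
exists (a * p ^ (2 * k - j))%:R.
  by apply/eqP; rewrite -natrX Zp_nat_eq0 expnMn -expnM dvdn_mull // dvdn_exp2l //; lia.
apply/eqP; rewrite -{1}[v]natr_Zp -natrX -natrM -natrD Zp_nat_eq0.
have -> : (p ^ (2 * k) + val v * (a * p ^ (2 * k - j))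
           = p ^ (2 * k - j) * (gcdn (p ^ k) (val v) + a * val v))%N.
  by rewrite gcdE mulnDr -expnD subnK; [ring | lia].
apply: dvdn_trans (dvdn_mul (dvdnn _) pk_dvd).
by rewrite -expnD dvdn_exp2l //; lia.
Qed.

Lemma root_of_low_coefs (f : {poly R}) : f`_0 = pR ^+ (2 * k) ->
  ~~ (p ^ k %| val (f`_1)%R)%N \/ f`_2 = quadratic_reply f`_1 -> exists x, root f x.
Proof.
move=> f0 f12; have [pk_dvd|pk_ndvd] := boolP (p ^ k %| val (f`_1)%R)%N; last first.
  have [x x2 fx] := exists_linear_annihilator pk_ndvd.
  by exists x; rewrite rootE (horner_sqr_eq0 _ x2) f0 fx.
have {f12} f2 : f`_2 = quadratic_reply f`_1 by case: f12 => [/negP|].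
have x3 : (pR ^+ k) ^+ 3 = 0 by rewrite -exprM Zp_expp_eq0 //; lia.
exists (pR ^+ k); rewrite rootE (horner_cube_eq0 _ x3) f0 f2 /quadratic_reply.
set q := (val (f`_1)%R %/ p ^ k)%N.
have -> : f`_1 = q%:R * pR ^+ k by rewrite -[f`_1]natr_Zp -(divnK pk_dvd) natrM natrX.
by rewrite (mulnC 2 k) exprM; apply/eqP; ring.
Qed.

Section WandaFirst.
Variable d : nat.
Hypothesis d_ge3 : (3 <= d)%N.
Local Notation position := {ffun 'I_d.+1 -> option R}.
Local Notation slot i := (inord i%N : 'I_d.+1).
Implicit Types (pos : position) (v : R).

Lemma slot_neq i j : (i <= d)%N -> (j <= d)%N -> i != j -> slot i != slot j.
Proof. by move=> le_id le_jd; rewrite -val_eqE /= !inordK. Qed.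

Definition wanda_secured (pos : position) :=
  pos (slot 0) = Some (pR ^+ (2 * k)) /\
  exists2 v, pos (slot 1) = Some v &
    ~~ (p ^ k %| val v)%N \/ pos (slot 2) = Some (quadratic_reply v).

Lemma wanda_secured_play pos i v :
  pos i = None -> wanda_secured pos -> wanda_secured (play_move pos i v).
Proof.
move=> free_i [a0 [u a1 a2]]; split; first exact: play_move_filled.
exists u; first exact: play_move_filled.
by case: a2 => [|a2]; [left | right; apply: play_move_filled].
Qed.

Lemma wanda_secured_root pos :
  wanda_secured pos -> exists x, root (pos_poly pos) x.
Proof.
move=> [a0 [u a1 a2]]; apply: root_of_low_coefs.
  by rewrite (coef_pos_poly pos (i := 0)) ?a0.
rewrite (coef_pos_poly pos (i := 1)) ?a1 /=; last by lia.
case: a2 => [|a2]; [by left | right].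
by rewrite (coef_pos_poly pos (i := 2)) ?a2 //; lia.
Qed.

Lemma wanda_secures pos :
  pos (slot 0) = Some (pR ^+ (2 * k)) ->
  pos (slot 1) = None \/ pos (slot 2) = None ->
  exists i v, legal_move pos i v /\ wanda_secured (play_move pos i v).
Proof.
move=> a0 free12; case a1: (pos (slot 1)) => [u|].
  have free2 : pos (slot 2) = None by case: free12 => //; rewrite a1.
  exists (slot 2), (quadratic_reply u); split.
    by apply: legal_move_interior; rewrite // -val_eqE /= inordK //; lia.
  split; first exact: play_move_filled.
  by exists u; [exact: play_move_filled | right; exact: play_move_same].
exists (slot 1), 1; split; first exact: legal_move1.
split; first exact: play_move_filled.
exists 1; first exact: play_move_same.
by left; rewrite Zp_val1 dvdn1 -(expn0 p) eqn_exp2l ?prime_gt1 // -lt0n.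
Qed.

Lemma wanda_wins_opening pos n :
  nfree pos = n -> pos (slot 0) = Some (pR ^+ (2 * k)) ->
  pos (slot 1) = None -> pos (slot 2) = None -> wanda_wins n false pos.
Proof.
move=> + a0 free1 free2.
case: n => [/nfree_eq0_filled/(_ _ free1)//|n nfree_n i v [free_i _ _]].
set pos' := play_move pos i v.
have free12 : pos' (slot 1) = None \/ pos' (slot 2) = None.
  have ne12 : slot 2 != slot 1 by apply: slot_neq; lia.
  rewrite /pos'; case: (eqVneq i (slot 1)) => [->|ne_i1]; [right | left].
    by rewrite play_move_other.
  by rewrite play_move_other // eq_sym.
have nfree' : nfree pos' = n by rewrite nfree_play_move // nfree_n.
case: n {nfree_n} nfree' => [/nfree_eq0_filled nfree0|n nfree'].
  by case: free12 => /nfree0.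
have [j [u [legal secured]]] := wanda_secures (play_move_filled v free_i a0) free12.
exists j, u; split=> //.
apply: (wanda_wins_of_stable wanda_secured_play) secured.
- by move=> pos'' _ /wanda_secured_root.
- by case: legal => free_j _ _; rewrite nfree_play_move ?nfree'.
Qed.

Lemma wanda_first_wins : wanda_wins d.+1 true ([ffun _ => None] : position).
Proof.
exists (slot 0), (pR ^+ (2 * k)); split.
  by split; rewrite ?ffunE // => _; apply: Zp_expp_neq0.
apply: wanda_wins_opening;
  rewrite ?play_move_same ?nfree_play_move ?nfree_empty ?ffunE //.
all: by rewrite (negbTE (slot_neq _ _ _)) //; lia.
Qed.

End WandaFirst.

End PrimePowerModulus.

Theorem lemma6 (p k d : nat) :
  prime p -> (1 <= k)%N -> odd d ->
  forall wanda_first : bool,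
    wanda_has_winning_strategy 'Z_(p ^ (2 * k + 1)) d wanda_first.
Proof.
move=> p_pr k_gt0 d_odd wanda_first; rewrite /wanda_has_winning_strategy.
have [->|d_ge3] : d = 1%N \/ (3 <= d)%N.
  by move: d_odd; case: d => [|[|[|d]]] //= _; [left | right].
- by case: wanda_first; [exact: wanda_first_wins_deg1 | exact: nora_first_wins_deg1].
- case: wanda_first; first exact: wanda_first_wins.
  by apply: nora_first_wins => // _; apply: Zp_six_neq0.
Qed.
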